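(* Let $k \ge 2$, $\rho \ge 1$ and $v$ be integers (for which $\beta(\rho,v,k)$ is defined). Then \[ \beta(\rho,v,k) \le \rho\left( \frac{k^2(\rho-1)}{2} + 1 + \max\left\{ k(k-1), \left\lfloor \frac{v-k\rho}{k-1} \right\rfloor \right\} \right). \]
   Context: For integers $v \ge k \ge 2$, a $(v,k)$-packing is a pair $(X,\mathcal{B})$ where $X$ is a set of $v$ points and $\mathcal{B}$ is a set of $k$-subsets of $X$ (blocks) such that every pair of distinct points lies in at most one block. A partial parallel class (PPC) is a set of pairwise disjoint blocks; its size is the number of blocks. A PPC of size $\rho$ is maximum if the packing has no PPC of size $\rho+1$. $\beta(\rho,v,k)$ denotes the maximum number of blocks in a $(v,k)$-packing in which the maximum PPC has size $\rho$. *)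

From mathcomp Require Import all_boot all_order all_algebra.
Set Implicit Arguments. Unset Strict Implicit. Unset Printing Implicit Defensive.

Definition is_packing (v k : nat) (B : {set {set 'I_v}}) : Prop :=
  (forall b, b \in B -> #|b| = k) /\
  (forall x y : 'I_v, x != y -> #|[set b in B | (x \in b) && (y \in b)]| <= 1)%N.

Definition is_PPC (v : nat) (B P : {set {set 'I_v}}) : Prop :=
  P \subset B /\
  (forall b1 b2, b1 \in P -> b2 \in P -> b1 != b2 -> [disjoint b1 & b2]).

Definition max_PPC_size (v : nat) (B : {set {set 'I_v}}) (rho : nat) : Prop :=
  (exists P, is_PPC B P /\ #|P| = rho) /\
  ~ (exists P, is_PPC B P /\ #|P| = rho.+1).

Definition is_beta (rho v k b : nat) : Prop :=
  (exists B : {set {set 'I_v}}, is_packing k B /\ max_PPC_size B rho /\ #|B| = b) /\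
  (forall B : {set {set 'I_v}}, is_packing k B -> max_PPC_size B rho -> (#|B| <= b)%N).

From mathcomp Require Import all_boot all_order all_algebra.
From mathcomp Require Import zify ring unstable.
Import Order.TTheory GRing.Theory Num.Theory.
Set Implicit Arguments. Unset Strict Implicit. Unset Printing Implicit Defensive.

(* Fix a maximum partial parallel class P; its blocks cover k * #|P| points.
   By maximality every other block meets some block of P.  Two disjoint sets
   X, Y are both met by at most #|X| * #|Y| blocks, since a block is fixed by
   one point of each; double counting over pairs of blocks of P bounds the
   blocks meeting at least two of them.  The blocks meeting only q in P
   ("attached" to q) pairwise intersect, otherwise q could be exchanged for two
   of them.  If they all pass through one point, each has at least k - 1
   points not covered by P, and no two share such a point, so there are at most
   (v - k #|P|) / (k - 1) of them; otherwise each point y of q is missed by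
   some attached block c, and every attached block through y meets c in its
   own point of c outside q, so there are at most k (k - 1) of them. *)

Lemma double_count (I J : finType) (A : {set I}) (C : {set J}) (R : I -> J -> bool) :
  \sum_(i in A) #|[set j in C | R i j]| = \sum_(j in C) #|[set i in A | R i j]|.
Proof.
rewrite (eq_bigr (fun i => \sum_(j in C) R i j)) => [|i _]; last first.
  by rewrite -sum1dep_card big_mkcondr.
rewrite exchange_big; apply: eq_bigr => j _.
by rewrite -sum1dep_card big_mkcondr.
Qed.

Lemma trivIsetU1_disjoint (T : finType) (A : {set T}) (P : {set {set T}}) :
  {in P, forall C : {set T}, [disjoint A & C]} -> trivIset P -> trivIset (A |: P).
Proof.
move=> disjA /trivIsetP triv; apply/trivIsetP => C1 C2.
case/setU1P => [->|C1P] /setU1P[->|C2P]; rewrite ?eqxx // => C12.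
- exact: disjA.
- by rewrite disjoint_sym; apply: disjA.
- exact: triv.
Qed.

Definition meets (T : finType) (A C : {set T}) := ~~ [disjoint A & C].

Lemma meetsP (T : finType) (A C : {set T}) :
  reflect (exists x, x \in A :&: C) (meets A C).
Proof. by rewrite /meets -setI_eq0; apply: set0Pn. Qed.

Section Packing.
Variables (T : finType) (B : {set {set T}}).
Hypothesis pair_in_one_block :
  forall x y : T, x != y -> #|[set b in B | (x \in b) && (y \in b)]| <= 1.

Lemma block_eq_of_pair b1 b2 x y : b1 \in B -> b2 \in B -> x != y ->
  x \in b1 -> y \in b1 -> x \in b2 -> y \in b2 -> b1 = b2.
Proof.
move=> b1B b2B xy xb1 yb1 xb2 yb2.
apply: (card_le1_eqP (pair_in_one_block xy));
  by rewrite inE ?b1B ?b2B ?xb1 ?yb1 ?xb2 ?yb2.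
Qed.

Lemma card_blockI_le1 b1 b2 : b1 \in B -> b2 \in B -> b1 != b2 -> #|b1 :&: b2| <= 1.
Proof.
move=> b1B b2B; apply: contraR; rewrite -ltnNge => /card_gt1P[x [y []]].
by move=> /setIP[xb1 xb2] /setIP[yb1 yb2] xy; rewrite (block_eq_of_pair b1B b2B xy).
Qed.

Lemma card_blocks_meeting_le (X Y : {set T}) : [disjoint X & Y] ->
  #|[set b in B | meets b X && meets b Y]| <= #|X| * #|Y|.
Proof.
move=> dXY.
have covered : [set b in B | meets b X && meets b Y] \subset
    \bigcup_(x in X) \bigcup_(y in Y) [set b in B | (x \in b) && (y \in b)].
  apply/subsetP => b; rewrite inE => /and3P[bB /meetsP[x /setIP[xb xX]]].
  move=> /meetsP[y /setIP[yb yY]].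
  by apply/bigcupP; exists x => //; apply/bigcupP; exists y; rewrite // inE bB xb yb.
apply: leq_trans (subset_leq_card covered) _.
apply: (leq_trans (card_big_setU _ _ _)); rewrite -sum_nat_const.
apply: leq_sum => x xX; apply: (leq_trans (card_big_setU _ _ _)).
rewrite -[#|Y|]muln1 -sum_nat_const; apply: leq_sum => y yY.
by apply: pair_in_one_block; apply: contraTneq yY => <-; rewrite (disjointFr dXY).
Qed.

(* Two blocks through [x] share no other point. *)
Lemma sum_card_blocks_through_le (x : T) (F : {set {set T}}) (Z : {set T}) :
  F \subset B -> x \notin Z -> {in F, forall a : {set T}, x \in a} ->
  \sum_(a in F) #|Z :&: a| <= #|Z|.
Proof.
move=> sFB xZ xF; rewrite double_count -sum1_card; apply: leq_sum => z zZ.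
have xz : x != z by apply: contraNneq xZ => ->.
apply: leq_trans (pair_in_one_block xz); apply: subset_leq_card.
apply/subsetP => a; rewrite !inE => /andP[aF ->].
by rewrite (subsetP sFB) ?xF.
Qed.

End Packing.

Section MaximumPPC.
Variables (T : finType) (k : nat) (B P : {set {set T}}).
Hypothesis block_size : forall b, b \in B -> #|b| = k.
Hypothesis pair_in_one_block :
  forall x y : T, x != y -> #|[set b in B | (x \in b) && (y \in b)]| <= 1.
Hypothesis PPC_sub : P \subset B.
Hypothesis PPC_triv : trivIset P.
Hypothesis PPC_max :
  forall P' : {set {set T}}, P' \subset B -> trivIset P' -> #|P'| != #|P|.+1.

Lemma card_cover_PPC : #|cover P| = k * #|P|.
Proof.
rewrite -(eqP PPC_triv) (eq_bigr (fun=> k)) => [|q qP].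
  by rewrite sum_nat_const mulnC.
exact/block_size/(subsetP PPC_sub).
Qed.

Lemma PPC_points_le : k * #|P| <= #|T|.
Proof. by rewrite -card_cover_PPC max_card. Qed.

Definition met_blocks b := [set q in P | meets b q].
Definition attached q := [set a in B :\: P | met_blocks a == [set q]].
Definition multi_met := [set b in B | 1 < #|met_blocks b|].

Lemma met_blocks_neq0 b : b \in B -> b \notin P -> met_blocks b != set0.
Proof.
move=> bB bP; apply/negP => /eqP met0.
have disj : {in P, forall q : {set T}, [disjoint b & q]}.
  by move=> q qP; have := in_set0 q; rewrite -met0 inE qP => /negbFE.
have := PPC_max _ (trivIsetU1_disjoint disj PPC_triv).
by rewrite subUset sub1set bB PPC_sub cardsU1 bP eqxx => /(_ isT).
Qed.

Lemma attachedP q a : a \in attached q ->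
  [/\ a \in B, a \notin P & met_blocks a = [set q]].
Proof. by rewrite !inE => /andP[/andP[aP aB] /eqP met_a]. Qed.

Lemma attached_meets q a : a \in attached q -> meets a q.
Proof.
by case/attachedP => _ _ met_a; have := set11 q; rewrite -met_a inE => /andP[].
Qed.

Lemma attached_disjoint q q' a : a \in attached q -> q' \in P -> q' != q ->
  [disjoint a & q'].
Proof.
case/attachedP => _ _ met_a q'P q'q; apply/negPn.
by have := in_set1 q' q; rewrite -met_a inE q'P (negbTE q'q) => /negbT.
Qed.

Lemma attached_pairwise_meet q a1 a2 : q \in P ->
  a1 \in attached q -> a2 \in attached q -> a1 != a2 -> meets a1 a2.
Proof.
move=> qP a1q a2q a12; apply/negP => disj12.
have disj a q' : a \in attached q -> q' \in P :\ q -> [disjoint a & q'].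
  by move=> aq; rewrite !inE => /andP[q'q q'P]; apply: attached_disjoint aq q'P q'q.
have [a1B a1P _] := attachedP a1q; have [a2B a2P _] := attachedP a2q.
have a2Pq : a2 \notin P :\ q by rewrite inE (negbTE a2P) andbF.
have a1Pq : a1 \notin a2 |: (P :\ q) by rewrite !inE (negbTE a12) (negbTE a1P) andbF.
have triv2 := trivIsetU1_disjoint (disj a2 ^~ a2q) (trivIsetD [set q] PPC_triv).
have disj1 : {in a2 |: (P :\ q), forall q' : {set T}, [disjoint a1 & q']}.
  by move=> q' /setU1P[-> //|]; apply: disj.
have := PPC_max _ (trivIsetU1_disjoint disj1 triv2).
rewrite !subUset !sub1set a1B a2B (subset_trans (subsetDl P _) PPC_sub).
by rewrite !cardsU1 a1Pq a2Pq (cardsD1 q P) qP eqxx => /(_ isT).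
Qed.

Lemma card_split_le :
  #|B| <= #|P| + #|multi_met| + \sum_(q in P) #|attached q|.
Proof.
have covered : B \subset P :|: multi_met :|: \bigcup_(q in P) attached q.
  apply/subsetP => b bB; rewrite !inE bB /=; case: (boolP (b \in P)) => //= bP.
  case: ltnP => //= met_le1; apply/bigcupP.
  have /set0Pn[q] := met_blocks_neq0 bB bP; rewrite inE => /andP[qP bq].
  exists q; rewrite // !inE bB bP eq_sym eqEcard sub1set cards1 met_le1 andbT.
  by rewrite /= inE qP bq.
apply: (leq_trans (subset_leq_card covered)).
apply: (leq_trans (leq_card_setU _ _).1); rewrite leq_add //.
  exact: (leq_card_setU _ _).1.
exact: card_big_setU.
Qed.

Lemma card_attached_through q x : q \in P -> x \in q ->
  {in attached q, forall a : {set T}, x \in a} ->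
  #|attached q| * (k - 1) <= #|T| - k * #|P|.
Proof.
move=> qP xq x_att; have qB := subsetP PPC_sub q qP.
have outside a : a \in attached q -> k - 1 <= #|~: cover P :&: a|.
  move=> aq; have [aB aP _] := attachedP aq.
  have inside : #|a :&: cover P| <= 1.
    apply: leq_trans (card_blockI_le1 pair_in_one_block aB qB _); last first.
      by apply: contraNneq aP => ->.
    apply/subset_leq_card/subsetP => z /setIP[za /bigcupP[q' q'P zq']].
    rewrite inE za; case: (eqVneq q' q) => [<- //|q'q].
    by rewrite (disjointFr (attached_disjoint aq q'P q'q) za) in zq'.
  rewrite setIC -setDE; have := cardsID (cover P) a; rewrite (block_size aB); lia.
have xU : x \notin ~: cover P by rewrite inE negbK; apply/bigcupP; exists q.
rewrite -(cardsC (cover P)) card_cover_PPC addKn -sum_nat_const.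
apply: leq_trans (sum_card_blocks_through_le pair_in_one_block _ xU x_att).
  exact: leq_sum.
by apply/subsetP => a /attachedP[].
Qed.

Lemma card_attached_avoiding q : q \in P ->
  {in q, forall y, exists2 c, c \in attached q & y \notin c} ->
  #|attached q| <= k * (k - 1).
Proof.
move=> qP avoid; have qB := subsetP PPC_sub q qP.
have covered : attached q \subset \bigcup_(y in q) [set a in attached q | y \in a].
  apply/subsetP => a aq; have /meetsP[y /setIP[ya yq]] := attached_meets aq.
  by apply/bigcupP; exists y; rewrite // inE aq ya.
apply: (leq_trans (subset_leq_card covered)); apply: (leq_trans (card_big_setU _ _ _)).
rewrite -(block_size qB) -sum_nat_const; apply: leq_sum => y yq.
have [c cq yc] := avoid y yq; have [cB cP _] := attachedP cq.
have through_c : [set a in attached q | y \in a] \subset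
    [set b in B | meets b [set y] && meets b (c :\: q)].
  apply/subsetP => a; rewrite inE => /andP[aq ya]; have [aB aP _] := attachedP aq.
  have ac : a != c by apply: contraNneq yc => <-.
  have /meetsP[w /setIP[wa wc]] := attached_pairwise_meet qP aq cq ac.
  have yw : y != w by apply: contraNneq yc => ->.
  have wq : w \notin q.
    apply: contraNN aP => wq.
    by rewrite (block_eq_of_pair pair_in_one_block aB qB yw).
  rewrite inE aB /=; apply/andP; split; apply/meetsP; [exists y | exists w].
    by rewrite !inE ya eqxx.
  by rewrite !inE wa wc wq.
apply: (leq_trans (subset_leq_card through_c)).
apply: leq_trans (card_blocks_meeting_le pair_in_one_block _) _.
  by rewrite disjoints1 inE negb_and yc orbT.
rewrite cards1 mul1n (block_size qB); have := cardsID q c; rewrite (block_size cB).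
have : 0 < #|c :&: q| by rewrite card_gt0 setI_eq0; apply: attached_meets cq.
lia.
Qed.

Lemma card_attached_le q : 1 < k -> q \in P ->
  #|attached q| <= maxn (k * (k - 1)) ((#|T| - k * #|P|) %/ (k - 1)).
Proof.
move=> k_gt1 qP.
have [/exists_inP[x xq /forall_inP x_att] | ] :=
  boolP [exists x in q, [forall a in attached q, x \in a]].
  by rewrite leq_max leq_divRL ?(card_attached_through qP xq x_att) ?orbT //; lia.
rewrite negb_exists_in => /forall_inP no_common.
rewrite leq_max card_attached_avoiding // => y yq.
by have := no_common y yq; rewrite negb_forall_in => /exists_inP[c cq yc]; exists c.
Qed.

Lemma card_multi_met_le : #|multi_met| * 2 <= #|P| * (#|P| - 1) * k ^ 2.
Proof.
pose pairs b q1 := #|[set q2 in P :\ q1 | meets b q1 && meets b q2]|.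
have pairs_gt0 b q q' : q \in P -> q' \in P -> q != q' ->
    meets b q -> meets b q' -> 0 < pairs b q.
  move=> qP q'P qq' bq bq'; apply/card_gt0P; exists q'.
  by rewrite !inE eq_sym qq' q'P bq bq'.
have two_pairs b : b \in multi_met -> 2 <= \sum_(q1 in P) pairs b q1.
  rewrite inE => /andP[_ /card_gt1P[q1 [q2 []]]].
  rewrite !inE => /andP[q1P bq1] /andP[q2P bq2] q12.
  rewrite (bigD1 q1) // (bigD1 q2) /=; last by rewrite q2P eq_sym.
  rewrite addnA (leq_trans _ (leq_addr _ _)) // -[2]/(1 + 1).
  by rewrite leq_add ?(pairs_gt0 b q1 q2) ?(pairs_gt0 b q2 q1) // eq_sym.
have pair_blocks q1 q2 : q1 \in P -> q2 \in P :\ q1 ->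
    #|[set b in multi_met | meets b q1 && meets b q2]| <= k ^ 2.
  move=> q1P; rewrite !inE => /andP[q21 q2P].
  apply: (@leq_trans #|[set b in B | meets b q1 && meets b q2]|).
    by apply/subset_leq_card/subsetP => b; rewrite !inE => /andP[/andP[-> _] ->].
  rewrite -mulnn -{1}(block_size (subsetP PPC_sub q1 q1P)).
  rewrite -(block_size (subsetP PPC_sub q2 q2P)).
  apply: card_blocks_meeting_le => //.
  by move/trivIsetP: PPC_triv; apply; rewrite // eq_sym.
rewrite -sum_nat_const.
apply: (@leq_trans (\sum_(b in multi_met) \sum_(q1 in P) pairs b q1)).
  exact: leq_sum.
rewrite exchange_big -mulnA -sum_nat_const; apply: leq_sum => q1 q1P.
have -> : #|P| - 1 = #|P :\ q1| by rewrite (cardsD1 q1 P) q1P addKn.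
rewrite /pairs double_count -sum_nat_const; apply: leq_sum => q2.
exact: pair_blocks.
Qed.

Lemma packing_card_le : 1 < k ->
  #|B| * 2 <= #|P| * (k ^ 2 * (#|P| - 1) + 2
                      + 2 * maxn (k * (k - 1)) ((#|T| - k * #|P|) %/ (k - 1))).
Proof.
move=> k_gt1; set M := maxn _ _.
have attached_le : \sum_(q in P) #|attached q| <= #|P| * M.
  by rewrite -sum_nat_const; apply: leq_sum => q; apply: card_attached_le.
have -> : #|P| * (k ^ 2 * (#|P| - 1) + 2 + 2 * M) =
    #|P| * (#|P| - 1) * k ^ 2 + #|P| * 2 + #|P| * M * 2 by ring.
have := card_split_le; have := card_multi_met_le; lia.
Qed.

End MaximumPPC.

Lemma is_PPCE v (B P : {set {set 'I_v}}) : is_PPC B P <-> P \subset B /\ trivIset P.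
Proof. by split=> -[sPB tP]; split=> //; apply/trivIsetP. Qed.

Theorem theorem5p4 (k rho v b : nat) :
  (2 <= k)%N -> (1 <= rho)%N -> is_beta rho v k b ->
  (b%:Q <= rho%:Q * ((k ^ 2 * (rho - 1))%N%:Q / 2%:Q + 1
       + (Num.max ((k * (k - 1))%N%:Z)
                  ((v%:Z - (k * rho)%N%:Z) %/ (k - 1)%N%:Z)%Z)%:~R))%R.
Proof.
move=> k_gt1 _ [[B [[block_size pair_in_one_block] [[[P [PPC_P <-]] no_larger] <-]]] _].
have [sPB trivP] := proj1 (is_PPCE B P) PPC_P.
have PPC_max (P' : {set {set 'I_v}}) :
    P' \subset B -> trivIset P' -> #|P'| != #|P|.+1.
  by move=> sP'B tP'; apply/eqP => cardP'; apply: no_larger; exists P'; rewrite is_PPCE.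
have := packing_card_le block_size pair_in_one_block sPB trivP PPC_max k_gt1.
have := PPC_points_le block_size sPB trivP; rewrite card_ord => kP_le_v.
rewrite subzn // divz_nat -!natz -natr_max maxEnat !natz.
set M := maxn _ _; move=> card_le.
rewrite -!pmulrn -(@ler_pM2r _ 2%:R) // -natrM.
set X := (k ^ 2 * (#|P| - 1))%N.
have -> : (#|P|%:R * (X%:R / 2 + 1 + M%:R) * 2 = (#|P| * (X + 2 + 2 * M))%:R :> rat)%R.
  by rewrite !(natrM, natrD); field.
by rewrite ler_nat.
Qed.
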